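(* Let $A(x)=\sin^2(2\pi x)$, $\hat m(A)=\frac{A(1/3)+A(2/3)}{2}$, $\eta(x)=\frac{x}{4}+\frac12$, $F(x)=A(\frac{x}{2})+A(\frac{x}{4}+\frac12)$, and for $x\in[0,1]$ and $n\in\mathbb{N}$ let $V_2^{n*}(x)=\sum_{i=0}^{n-1}[F(\eta^i(x))-2\hat m(A)]$. Then $V_2^{n*}$ converges uniformly on $[0,1]$ as $n\to\infty$.
   Context: $\eta^i$ denotes the $i$-th iterate of $\eta$, with $\eta^0$ the identity. *)

From Stdlib Require Import Reals.
Open Scope R_scope.

Definition A (x : R) : R := (sin (2 * PI * x)) ^ 2.

Definition mhat : R := (A (1/3) + A (2/3)) / 2.

Definition eta (x : R) : R := x / 4 + 1 / 2.

Definition eta_iter (i : nat) (x : R) : R := Nat.iter i eta x.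

Definition F (x : R) : R := A (x / 2) + A (x / 4 + 1 / 2).

Fixpoint V2 (n : nat) (x : R) : R :=
  match n with
  | O => 0
  | S k => V2 k x + (F (eta_iter k x) - 2 * mhat)
  end.

(* [eta] contracts by a factor 4 towards its fixed point 2/3, and [F] is Lipschitz with
   [F (2/3) = A (1/3) + A (2/3) = 2 mhat].  Hence the i-th summand of [V2 n x] is bounded by
   a constant times [|x - 2/3| / 4^i], uniformly for bounded [x], and the series converges
   normally, hence uniformly (Weierstrass M-test). *)

From Stdlib Require Import Reals Lra Lia.
Open Scope R_scope.

Lemma Rabs_sin_sub_le a b : Rabs (sin a - sin b) <= Rabs (a - b).
Proof.
  destruct (MVT_abs sin cos b a) as [c [-> _]].
  { intros; apply derivable_pt_lim_sin. }
  rewrite <- (Rmult_1_l (Rabs (a - b))) at 2.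
  apply Rmult_le_compat_r; [apply Rabs_pos | apply Rabs_le, COS_bound].
Qed.

Lemma Rabs_A_sub_le u v : Rabs (A u - A v) <= 4 * PI * Rabs (u - v).
Proof.
  unfold A; set (a := 2 * PI * u); set (b := 2 * PI * v).
  replace (sin a ^ 2 - sin b ^ 2) with ((sin a - sin b) * (sin a + sin b)) by ring.
  rewrite Rabs_mult.
  assert (Hdiff : Rabs (sin a - sin b) <= 2 * PI * Rabs (u - v)).
  { replace (2 * PI * Rabs (u - v)) with (Rabs (a - b)).
    - apply Rabs_sin_sub_le.
    - unfold a, b; replace (2 * PI * u - 2 * PI * v) with (2 * PI * (u - v)) by ring.
      rewrite Rabs_mult, (Rabs_right (2 * PI)); [reflexivity | pose proof PI_RGT_0; lra]. }
  assert (Hsum : Rabs (sin a + sin b) <= 2).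
  { apply Rabs_le; pose proof (SIN_bound a); pose proof (SIN_bound b); lra. }
  replace (4 * PI * Rabs (u - v)) with (2 * PI * Rabs (u - v) * 2) by ring.
  apply Rmult_le_compat; auto using Rabs_pos.
Qed.

Lemma Rabs_F_sub_2mhat_le y : Rabs (F y - 2 * mhat) <= 3 * PI * Rabs (y - 2 / 3).
Proof.
  unfold F, mhat.
  pose proof (Rabs_A_sub_le (y / 2) (1 / 3)) as H1.
  pose proof (Rabs_A_sub_le (y / 4 + 1 / 2) (2 / 3)) as H2.
  replace (y / 2 - 1 / 3) with ((y - 2 / 3) * (1 / 2)) in H1 by field.
  replace (y / 4 + 1 / 2 - 2 / 3) with ((y - 2 / 3) * (1 / 4)) in H2 by field.
  rewrite Rabs_mult, (Rabs_right (1 / 2)) in H1 by lra.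
  rewrite Rabs_mult, (Rabs_right (1 / 4)) in H2 by lra.
  replace (A (y / 2) + A (y / 4 + 1 / 2) - 2 * ((A (1 / 3) + A (2 / 3)) / 2))
    with ((A (y / 2) - A (1 / 3)) + (A (y / 4 + 1 / 2) - A (2 / 3))) by field.
  eapply Rle_trans; [apply Rabs_triang | lra].
Qed.

Lemma eta_iter_sub_fixpoint i x : eta_iter i x - 2 / 3 = (x - 2 / 3) * (/ 4) ^ i.
Proof.
  unfold eta_iter; induction i as [| i IH]; simpl.
  - ring.
  - unfold eta at 1.
    replace ((x - 2 / 3) * (/ 4 * (/ 4) ^ i)) with ((x - 2 / 3) * (/ 4) ^ i * / 4) by ring.
    rewrite <- IH; field.
Qed.

Lemma geometric_series_cv q : Rabs q < 1 ->
  Un_cv (fun n => sum_f_R0 (fun k => q ^ k) n) (/ (1 - q)).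
Proof.
  intros Hq eps Heps.
  destruct (GP_infinite q Hq eps Heps) as [N HN].
  exists N; intros n Hn.
  rewrite (sum_eq _ (fun k => 1 * q ^ k)) by (intros; ring).
  exact (HN n Hn).
Qed.

Lemma CVN_r_geometric (fn : nat -> R -> R) (r : posreal) (C q : R) :
  0 <= C -> 0 <= q < 1 ->
  (forall n y, Boule 0 r y -> Rabs (fn n y) <= C * q ^ n) -> CVN_r fn r.
Proof.
  intros HC Hq Hbound.
  exists (fun n => C * q ^ n), (C * / (1 - q)); split; [| exact Hbound].
  apply (Un_cv_ext (fun n => C * sum_f_R0 (fun k => q ^ k) n)).
  - intro n; rewrite scal_sum; apply sum_eq; intros k _.
    rewrite Rabs_right; [ring | apply Rle_ge, Rmult_le_pos, pow_le; lra].
  - assert (Hconst : Un_cv (fun _ => C) C).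
    { intros eps Heps; exists O; intros; rewrite Rdist_eq; exact Heps. }
    apply (CV_mult _ _ _ _ Hconst), geometric_series_cv.
    rewrite Rabs_right; lra.
Qed.

Definition V2_term (k : nat) (x : R) : R := F (eta_iter k x) - 2 * mhat.

Lemma V2_S_SP n x : V2 (S n) x = SP V2_term n x.
Proof.
  unfold SP; induction n as [| n IH]; [unfold V2_term, eta_iter; simpl; ring |].
  change (V2 (S (S n)) x) with (V2 (S n) x + V2_term (S n) x).
  rewrite IH; reflexivity.
Qed.

Lemma Rabs_V2_term_le (r : posreal) k y : Boule 0 r y ->
  Rabs (V2_term k y) <= 3 * PI * (r + 2 / 3) * (/ 4) ^ k.
Proof.
  unfold Boule, V2_term; rewrite Rminus_0_r; intros Hy.
  eapply Rle_trans; [apply Rabs_F_sub_2mhat_le |].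
  rewrite eta_iter_sub_fixpoint, Rabs_mult, (Rabs_right ((/ 4) ^ k))
    by (apply Rle_ge, pow_le; lra).
  assert (Rabs (y - 2 / 3) <= r + 2 / 3).
  { eapply Rle_trans; [apply Rabs_triang | rewrite Rabs_Ropp, (Rabs_right (2 / 3)); lra]. }
  pose proof PI_RGT_0; pose proof (pow_le (/ 4) k ltac:(lra)).
  rewrite <- Rmult_assoc; apply Rmult_le_compat_r; [lra |].
  apply Rmult_le_compat_l; lra.
Qed.

Lemma V2_term_CVN_R : CVN_R V2_term.
Proof.
  intro r; apply (CVN_r_geometric _ _ (3 * PI * (r + 2 / 3)) (/ 4)).
  - pose proof PI_RGT_0; pose proof (cond_pos r); apply Rmult_le_pos; lra.
  - lra.
  - apply Rabs_V2_term_le.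
Qed.

Theorem mainTheorem6 :
  exists g : R -> R,
    forall eps : R, 0 < eps ->
      exists N : nat, forall n : nat, (N <= n)%nat ->
        forall x : R, 0 <= x <= 1 -> Rabs (V2 n x - g x) < eps.
Proof.
  pose (cv := CVN_R_CVS _ V2_term_CVN_R).
  exists (SFL V2_term cv); intros eps Heps.
  (* [Boule 0 r] is an open ball, so covering [0, 1] needs a radius > 1. *)
  destruct (CVN_CVU V2_term cv (mkposreal 2 ltac:(lra)) (V2_term_CVN_R _) eps Heps)
    as [N HN].
  exists (S N); intros [| m] Hm x Hx; [lia |].
  rewrite V2_S_SP, Rabs_minus_sym; apply HN; [lia |].
  unfold Boule; simpl; rewrite Rminus_0_r, Rabs_right; lra.
Qed.
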